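(* Let $g:[0,1]\to\mathbb{R}$ and let $0<c_1<c_2<\dots<c_r<1$ ($r<\infty$) be points such that $g$ is twice differentiable with bounded second derivative on $[0,1]$ except at the points $c_j$, which are jump discontinuities at which both one-sided limits $g(c_j-)$, $g(c_j+)$ exist and are finite. (i) If $g$ is left-continuous at each $c_j$, then as $n\to\infty$ \[ \sum_{k=1}^{n-1} g\left(\frac kn\right)=n\int_0^1 g(x)\,dx-\frac{g(0)+g(1)}{2}+\sum_{j=1}^r\left(\{nc_j\}-\frac12\right)\left[g(c_j+)-g(c_j-)\right]+\mathcal{O}\left(\frac1n\right), \] where $\{x\}=x-\lfloor x\rfloor$. (ii) If $g$ is right-continuous at $c_j$, then the same formula holds with $\{nc_j\}$ replaced by $\{nc_j\}'$, where $\{x\}'=1+x-\lceil x\rceil$ (the fractional part of $x$, except that it equals $1$ when $x$ is an integer). *)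

From Stdlib Require Import Reals.
From Coquelicot Require Import Coquelicot.
Open Scope R_scope.

Fixpoint rsum (n : nat) (f : nat -> R) : R :=
  match n with
  | O => 0
  | S k => rsum k f + f k
  end.

Definition floorR (x : R) : R := IZR (Int_part x).
Definition ceilR (x : R) : R := - floorR (- x).

Definition fracR (x : R) : R := x - floorR x.
Definition fracR' (x : R) : R := 1 + x - ceilR x.

Definition regular_pt (r : nat) (c : nat -> R) (x : R) : Prop :=
  0 < x < 1 /\ forall j, (j < r)%nat -> x <> c j.

(* Write g = s + sum_j (g(c_j+) - g(c_j-)) H_j, where H_j is the unit step at c_j, taking at c_j
   the value that makes s continuous there (0 if g is left-continuous at c_j, 1 if it is
   right-continuous).  Then s is Lipschitz on [0,1] and, off the c_j, twice differentiable with
   s'' = g''.  The composite trapezoid rule with step 1/n therefore approximates the integral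
   of s with error O(n^-3) on each of the n cells free of jumps and O(n^-2) on each of the at
   most r cells containing some c_j, hence O(n^-2) in total; multiplied by n this is the
   O(1/n) of the theorem.  For a step function the sum is a count of grid points:
   sum_{k=1}^{n-1} H_j(k/n) is n - 1 - floor(n c_j) (resp. n - ceil(n c_j)), while
   n * int_0^1 H_j = n (1 - c_j); the difference produces the terms {n c_j} - 1/2
   (resp. {n c_j}' - 1/2). *)

From Stdlib Require Import Reals Lra Lia Classical.
From Coquelicot Require Import Coquelicot.
Open Scope R_scope.

Lemma rsum_ext n f g : (forall k, (k < n)%nat -> f k = g k) -> rsum n f = rsum n g.
Proof.
  induction n as [|n IH]; intros Hfg; simpl; [reflexivity|].
  rewrite IH, Hfg; auto with arith.
Qed.

Lemma rsum_plus n f g : rsum n (fun k => f k + g k) = rsum n f + rsum n g.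
Proof. induction n; simpl; lra. Qed.

Lemma rsum_minus n f g : rsum n (fun k => f k - g k) = rsum n f - rsum n g.
Proof. induction n; simpl; lra. Qed.

Lemma rsum_scal n a f : rsum n (fun k => a * f k) = a * rsum n f.
Proof. induction n; simpl; [ring | rewrite IHn; ring]. Qed.

Lemma rsum_const n a : rsum n (fun _ => a) = INR n * a.
Proof. induction n; simpl rsum; [simpl; ring | rewrite IHn, S_INR; ring]. Qed.

Lemma rsum_le n f g : (forall k, (k < n)%nat -> f k <= g k) -> rsum n f <= rsum n g.
Proof.
  induction n as [|n IH]; intros Hfg; simpl; [lra|].
  apply Rplus_le_compat; auto with arith.
Qed.

Lemma rsum_abs n f : Rabs (rsum n f) <= rsum n (fun k => Rabs (f k)).
Proof.
  induction n; simpl; [rewrite Rabs_R0; lra|].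
  eapply Rle_trans; [apply Rabs_triang | lra].
Qed.

Lemma rsum_nonneg n f : (forall k, (k < n)%nat -> 0 <= f k) -> 0 <= rsum n f.
Proof. intros Hf. rewrite <- (Rmult_0_r (INR n)), <- rsum_const. now apply rsum_le. Qed.

Lemma rsum_term_le n f i :
  (forall k, (k < n)%nat -> 0 <= f k) -> (i < n)%nat -> f i <= rsum n f.
Proof.
  induction n as [|n IH]; intros Hf Hi; [lia|]. simpl.
  assert (Hn : 0 <= f n) by auto.
  destruct (Nat.eq_dec i n) as [->|Hne].
  - enough (0 <= rsum n f) by lra. apply rsum_nonneg; auto.
  - enough (f i <= rsum n f) by lra. apply IH; [auto | lia].
Qed.

Lemma rsum_swap n m (f : nat -> nat -> R) :
  rsum n (fun k => rsum m (f k)) = rsum m (fun j => rsum n (fun k => f k j)).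
Proof.
  induction n; simpl.
  - rewrite rsum_const. ring.
  - now rewrite IHn, <- rsum_plus.
Qed.

Lemma rsum_shift n f : rsum (S n) f = f O + rsum n (fun k => f (S k)).
Proof. induction n; simpl in *; lra. Qed.

Lemma rsum_single n f j :
  (j < n)%nat -> (forall k, (k < n)%nat -> k <> j -> f k = 0) -> rsum n f = f j.
Proof.
  induction n as [|n IH]; intros Hj Hf; [lia|]. simpl.
  destruct (Nat.eq_dec j n) as [->|Hne].
  - rewrite (rsum_ext n f (fun _ => 0)), rsum_const by (intros; apply Hf; lia). ring.
  - rewrite IH, (Hf n) by (auto; lia). ring.
Qed.

(** * Counting grid points *)

Definition grid_sum (f : R -> R) (n : nat) : R := rsum (n - 1) (fun k => f (INR (S k) / INR n)).

Lemma grid_sum_ext f h n : (forall y, 0 < y < 1 -> f y = h y) -> grid_sum f n = grid_sum h n.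
Proof.
  intros Hfh. unfold grid_sum. apply rsum_ext. intros k Hk. apply Hfh.
  assert (Hn : 0 < INR n) by (apply lt_0_INR; lia). split.
  - apply Rdiv_lt_0_compat; [apply lt_0_INR; lia | auto].
  - rewrite <- Rdiv_lt_1 by auto. apply lt_INR. lia.
Qed.

Lemma floorR_spec y : floorR y <= y < floorR y + 1.
Proof. unfold floorR. destruct (base_Int_part y). lra. Qed.

Lemma IZR_le_lt_succ (a b : Z) : IZR a <= IZR b <-> IZR a < IZR b + 1.
Proof.
  rewrite <- plus_IZR. split; intros Hab.
  - apply IZR_lt. apply le_IZR in Hab. lia.
  - apply IZR_le. apply lt_IZR in Hab. lia.
Qed.

Lemma int_le_floorR (z : Z) y : IZR z <= floorR y <-> IZR z <= y.
Proof.
  destruct (floorR_spec y) as [Hle Hlt]. split; intros Hz; [lra|].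
  unfold floorR in *. apply IZR_le_lt_succ. lra.
Qed.

Lemma floorR_le_int (z : Z) y : floorR y <= IZR z <-> y < IZR z + 1.
Proof.
  rewrite <- plus_IZR. split; intros Hz.
  - apply Rnot_le_lt. rewrite <- int_le_floorR, plus_IZR. lra.
  - destruct (floorR_spec y). rewrite plus_IZR in Hz.
    unfold floorR in *. apply IZR_le_lt_succ. lra.
Qed.

Lemma lt_nat_iff_floorR_le y (k : nat) : y < INR (S k) <-> floorR y <= INR k.
Proof. rewrite S_INR, INR_IZR_INZ, floorR_le_int. tauto. Qed.

Lemma le_nat_iff_ceilR_le y (k : nat) : y <= INR (S k) <-> ceilR y - 1 <= INR k.
Proof.
  unfold ceilR. rewrite S_INR, INR_IZR_INZ.
  assert (Hfl := int_le_floorR (- (Z.of_nat k + 1)) (- y)).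
  rewrite opp_IZR, plus_IZR in Hfl. split; intros.
  - enough (- (IZR (Z.of_nat k) + 1) <= floorR (- y)) by lra. apply Hfl. lra.
  - enough (- (IZR (Z.of_nat k) + 1) <= - y) by lra. apply Hfl. lra.
Qed.

Lemma rsum_indicator_ge (z : Z) N : (0 <= z)%Z ->
  rsum N (fun k => if Rle_dec (IZR z) (INR k) then 1 else 0) = INR N - Rmin (INR N) (IZR z).
Proof.
  intros Hz. apply IZR_le in Hz. induction N as [|N IH].
  - simpl. rewrite Rmin_left by lra. ring.
  - cbn [rsum]. rewrite IH, S_INR, INR_IZR_INZ in *.
    destruct (Rle_dec (IZR z) (IZR (Z.of_nat N))) as [Hle|Hgt].
    + rewrite !Rmin_right by lra. ring.
    + assert (IZR (Z.of_nat N) + 1 <= IZR z).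
      { apply Rnot_le_lt, lt_IZR in Hgt. rewrite <- plus_IZR. apply IZR_le. lia. }
      rewrite !Rmin_left by lra. ring.
Qed.

Lemma grid_count_lt n x : (0 < n)%nat -> 0 < x < 1 ->
  grid_sum (fun y => if Rlt_dec x y then 1 else 0) n = INR n - 1 - floorR (INR n * x).
Proof.
  intros Hn Hx. unfold grid_sum. assert (Hnp : 0 < INR n) by (apply lt_0_INR; auto).
  rewrite (rsum_ext _ _ (fun k => if Rle_dec (floorR (INR n * x)) (INR k) then 1 else 0)).
  - assert (Hlo : 0 <= floorR (INR n * x)) by (apply (int_le_floorR 0); nra).
    assert (Hhi : floorR (INR n * x) <= INR (n - 1)).
    { rewrite (INR_IZR_INZ (n - 1)), floorR_le_int, <- INR_IZR_INZ, minus_INR by lia. simpl. nra. }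
    unfold floorR in *. rewrite rsum_indicator_ge by (apply le_IZR; auto).
    rewrite Rmin_right, minus_INR by (auto; lia). simpl. ring.
  - intros k _. destruct Rlt_dec as [Hx'|Hx'], Rle_dec; try reflexivity;
      rewrite <- Rlt_div_r, Rmult_comm, lt_nat_iff_floorR_le in Hx' by auto; tauto.
Qed.

Lemma grid_count_le n x : (0 < n)%nat -> 0 < x < 1 ->
  grid_sum (fun y => if Rle_dec x y then 1 else 0) n = INR n - ceilR (INR n * x).
Proof.
  intros Hn Hx. unfold grid_sum. assert (Hnp : 0 < INR n) by (apply lt_0_INR; auto).
  rewrite (rsum_ext _ _ (fun k => if Rle_dec (ceilR (INR n * x) - 1) (INR k) then 1 else 0)).
  - assert (Hlo : 0 <= ceilR (INR n * x) - 1).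
    { assert (floorR (- (INR n * x)) <= IZR (-1)) by (apply floorR_le_int; simpl; nra).
      unfold ceilR. simpl in *. lra. }
    assert (Hhi : ceilR (INR n * x) - 1 <= INR (n - 1)).
    { destruct n as [|m]; [lia|]. replace (S m - 1)%nat with m by lia.
      apply le_nat_iff_ceilR_le. nra. }
    replace (ceilR (INR n * x) - 1) with (IZR (- Int_part (- (INR n * x)) - 1))
      in * by (unfold ceilR, floorR; rewrite minus_IZR, opp_IZR; ring).
    rewrite rsum_indicator_ge by (apply le_IZR; auto).
    rewrite Rmin_right, minus_INR by (auto; lia). unfold ceilR, floorR.
    rewrite minus_IZR, opp_IZR. simpl. ring.
  - intros k _. destruct Rle_dec as [Hx'|Hx'], Rle_dec; try reflexivity;
      rewrite <- Rle_div_r, Rmult_comm, le_nat_iff_ceilR_le in Hx' by auto; tauto.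
Qed.

(** * Mean value inequalities *)

Lemma ball_R (a d y : R) : ball a d y <-> Rabs (y - a) < d.
Proof. reflexivity. Qed.

Lemma continuity_pt_of_ex_derive f x : ex_derive f x -> continuity_pt f x.
Proof. intros Hd. apply continuity_pt_filterlim, (ex_derive_continuous f x Hd). Qed.

Lemma MVT_open f a b : a < b -> (forall x, a < x < b -> ex_derive f x) ->
  (forall x, a <= x <= b -> continuity_pt f x) ->
  exists c, a < c < b /\ f b - f a = Derive f c * (b - a).
Proof.
  intros Hab Hd Hc.
  destruct (MVT f id a b (fun c P => ex_derive_Reals_0 f c (Hd c P))
             (fun c _ => derivable_pt_id c) Hab Hc
             (fun c _ => derivable_continuous_pt _ _ (derivable_pt_id c))) as [c [Hcab Hmvt]].
  exists c. split; auto.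
  rewrite Derive_Reals, derive_pt_id in Hmvt. unfold id in Hmvt. lra.
Qed.

Lemma Rabs_sub_le_derive_bound F a b K : a <= b ->
  (forall x, a < x < b -> ex_derive F x /\ Rabs (Derive F x) <= K) ->
  (forall x, a <= x <= b -> continuity_pt F x) -> Rabs (F b - F a) <= K * (b - a).
Proof.
  intros Hab Hd Hc. destruct (Req_dec a b) as [<-|Hne].
  - rewrite Rminus_diag, Rabs_R0. lra.
  - destruct (MVT_open F a b) as [c [Hcab ->]]; [lra | apply Hd | auto |].
    rewrite Rabs_mult, (Rabs_right (b - a)) by lra.
    apply Rmult_le_compat_r; [lra | apply Hd; auto].
Qed.

Lemma at_right_Rabs_lt (f : R -> R) a l : filterlim f (at_right a) (locally l) ->
  forall eps, 0 < eps -> exists d, 0 < d /\ forall y, a < y < a + d -> Rabs (f y - l) < eps.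
Proof.
  intros Hlim eps Heps.
  destruct (proj1 (filterlim_locally f l) Hlim (mkposreal eps Heps)) as [d Hd].
  exists d. split; [apply cond_pos|]. intros y Hy. apply Hd; [|lra].
  apply ball_R. rewrite Rabs_right; lra.
Qed.

Lemma at_left_Rabs_lt (f : R -> R) a l : filterlim f (at_left a) (locally l) ->
  forall eps, 0 < eps -> exists d, 0 < d /\ forall y, a - d < y < a -> Rabs (f y - l) < eps.
Proof.
  intros Hlim eps Heps.
  destruct (proj1 (filterlim_locally f l) Hlim (mkposreal eps Heps)) as [d Hd].
  exists d. split; [apply cond_pos|]. intros y Hy. apply Hd; [|lra].
  apply ball_R. rewrite Rabs_left; lra.
Qed.

Lemma Rabs_sub_le_derive_bound_one_sided (f : R -> R) L a b : a < b ->
  (forall x, a < x < b -> ex_derive f x /\ Rabs (Derive f x) <= L) ->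
  filterlim f (at_right a) (locally (f a)) -> filterlim f (at_left b) (locally (f b)) ->
  Rabs (f b - f a) <= L * (b - a).
Proof.
  (* The mean value bound on [a + d/2, b - d/2], with d small enough for the one-sided
     continuity at a and b to cost at most eps. *)
  intros Hab Hd Hra Hlb. apply Rle_plus_epsilon. intros eps Heps.
  destruct (at_right_Rabs_lt f a (f a) Hra (eps / 2)) as [d1 [Hd1 Ha]]; [lra|].
  destruct (at_left_Rabs_lt f b (f b) Hlb (eps / 2)) as [d2 [Hd2 Hb]]; [lra|].
  set (d := Rmin (Rmin d1 d2) ((b - a) / 2)).
  assert (Hd0 : 0 < d) by (apply Rmin_glb_lt; [apply Rmin_glb_lt|]; lra).
  assert (d <= d1 /\ d <= d2 /\ d <= (b - a) / 2) as (Hdd1 & Hdd2 & Hdab).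
  { unfold d. pose proof (Rmin_l (Rmin d1 d2) ((b - a) / 2)).
    pose proof (Rmin_r (Rmin d1 d2) ((b - a) / 2)).
    pose proof (Rmin_l d1 d2). pose proof (Rmin_r d1 d2). lra. }
  assert (Hinner : Rabs (f (b - d / 2) - f (a + d / 2)) <= L * ((b - d / 2) - (a + d / 2))).
  { apply Rabs_sub_le_derive_bound; [lra | intros; apply Hd; lra |].
    intros; apply continuity_pt_of_ex_derive, Hd; lra. }
  assert (HL : 0 <= L) by (destruct (Hd (a + d / 2)) as [_ HL]; [lra|];
                           pose proof (Rabs_pos (Derive f (a + d / 2))); lra).
  assert (Rabs (f (a + d / 2) - f a) < eps / 2) by (apply Ha; lra).
  assert (Rabs (f b - f (b - d / 2)) < eps / 2) by (rewrite Rabs_minus_sym; apply Hb; lra).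
  replace (f b - f a) with ((f (b - d / 2) - f (a + d / 2)) + (f b - f (b - d / 2))
                            + (f (a + d / 2) - f a)) by ring.
  assert (L * ((b - d / 2) - (a + d / 2)) <= L * (b - a)) by (apply Rmult_le_compat_l; lra).
  pose proof (Rabs_triang ((f (b - d / 2) - f (a + d / 2)) + (f b - f (b - d / 2)))
                          (f (a + d / 2) - f a)).
  pose proof (Rabs_triang (f (b - d / 2) - f (a + d / 2)) (f b - f (b - d / 2))).
  lra.
Qed.

Lemma Rabs_sub_le_derive_bound_except (f : R -> R) L (c : nat -> R) r a b : a < b ->
  (forall x, a < x < b -> (forall j, (j < r)%nat -> x <> c j) ->
     ex_derive f x /\ Rabs (Derive f x) <= L) ->
  (forall x, a <= x < b -> filterlim f (at_right x) (locally (f x))) ->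
  (forall x, a < x <= b -> filterlim f (at_left x) (locally (f x))) ->
  Rabs (f b - f a) <= L * (b - a).
Proof.
  revert a b. induction r as [|r IH]; intros a b Hab Hd Hr Hl.
  - apply Rabs_sub_le_derive_bound_one_sided; auto.
    + intros x Hx. apply Hd; [auto | intros; lia].
    + apply Hr; lra.
    + apply Hl; lra.
  - assert (Hd' : forall x, a < x < b -> x <> c r -> (forall j, (j < r)%nat -> x <> c j) ->
                  ex_derive f x /\ Rabs (Derive f x) <= L).
    { intros x Hx Hxr Hxj. apply Hd; auto. intros j Hj.
      destruct (Nat.eq_dec j r) as [->|]; auto. apply Hxj; lia. }
    destruct (classic (a < c r < b)) as [Hin|Hout].
    + replace (f b - f a) with ((f b - f (c r)) + (f (c r) - f a)) by ring.
      replace (L * (b - a)) with (L * (b - c r) + L * (c r - a)) by ring.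
      eapply Rle_trans; [apply Rabs_triang|].
      apply Rplus_le_compat; apply IH; try lra; try (intros; apply Hd'; auto; lra);
        intros; [apply Hr | apply Hl | apply Hr | apply Hl]; lra.
    + apply IH; auto. intros x Hx. apply Hd'; auto. intros ->. tauto.
Qed.

Lemma lipschitz_of_derive_bound F K u v :
  (forall z, u < z < v -> ex_derive F z /\ Rabs (Derive F z) <= K) ->
  forall x y, u < x < v -> u < y < v -> Rabs (F x - F y) <= K * Rabs (x - y).
Proof.
  intros Hd.
  assert (Hle : forall x y, u < x < v -> u < y < v -> x <= y -> Rabs (F y - F x) <= K * (y - x)).
  { intros x y Hx Hy Hxy. apply Rabs_sub_le_derive_bound; [auto | intros; apply Hd; lra |].
    intros; apply continuity_pt_of_ex_derive, Hd; lra. }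
  intros x y Hx Hy. destruct (Rle_dec x y).
  - rewrite Rabs_minus_sym, (Rabs_minus_sym x), (Rabs_right (y - x)) by lra. auto.
  - rewrite (Rabs_right (x - y)) by lra. apply Hle; auto; lra.
Qed.

(** * The trapezoid rule *)

Definition trapezoid_error f u v := RInt f u v - (v - u) * (f u + f v) / 2.

Lemma is_RInt_affine a D u v :
  is_RInt (fun x => a + D * (x - u)) u v ((v - u) * a + D * (v - u) ^ 2 / 2).
Proof.
  replace ((v - u) * a + D * (v - u) ^ 2 / 2)
    with (minus (a * v + D * (v - u) ^ 2 / 2) (a * u + D * (u - u) ^ 2 / 2))
    by (unfold minus, plus, opp; simpl; field).
  apply (is_RInt_derive (fun x => a * x + D * (x - u) ^ 2 / 2)).
  - intros x _. auto_derive; auto. field.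
  - intros x _. apply (ex_derive_continuous (fun x => a + D * (x - u))). auto_derive. auto.
Qed.

Lemma ex_RInt_continuity_pt f a b : (forall x, continuity_pt f x) -> ex_RInt f a b.
Proof.
  intros Hc. apply (ex_RInt_continuous (V := R_CompleteNormedModule)).
  intros z _. apply continuity_pt_filterlim, Hc.
Qed.

Lemma trapezoid_error_lipschitz f L u v : 0 <= L -> u <= v -> (forall x, continuity_pt f x) ->
  (forall x y, u <= x <= v -> u <= y <= v -> Rabs (f x - f y) <= L * Rabs (x - y)) ->
  Rabs (trapezoid_error f u v) <= 2 * L * (v - u) ^ 2.
Proof.
  intros HL Huv Hc Hl. unfold trapezoid_error.
  assert (Hdrift : Rabs (RInt (fun t => f t - f u) u v) <= (v - u) * (L * (v - u))).
  { apply abs_RInt_le_const; [lra | |].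
    - apply (ex_RInt_minus (V := R_NormedModule) f (fun _ => f u));
        [apply ex_RInt_continuity_pt; auto | apply ex_RInt_const].
    - intros t Ht. eapply Rle_trans; [apply Hl; lra|].
      apply Rmult_le_compat_l; [auto | rewrite Rabs_right; lra]. }
  assert (Hend : (v - u) * Rabs (f v - f u) <= (v - u) * (L * (v - u))).
  { apply Rmult_le_compat_l; [lra|]. eapply Rle_trans; [apply Hl; lra|].
    rewrite Rabs_right; lra. }
  assert (E : RInt (fun t => f t - f u) u v = RInt f u v - (v - u) * f u).
  { apply is_RInt_unique, (is_RInt_minus (V := R_CompleteNormedModule) f (fun _ => f u)).
    - apply RInt_correct, ex_RInt_continuity_pt; auto.
    - apply (is_RInt_const (V := R_CompleteNormedModule)). }
  replace (RInt f u v - (v - u) * (f u + f v) / 2)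
    with (RInt (fun t => f t - f u) u v + - ((v - u) * (f v - f u) / 2)) by (rewrite E; field).
  eapply Rle_trans; [apply Rabs_triang|]. rewrite Rabs_Ropp.
  unfold Rdiv. rewrite Rabs_mult, Rabs_mult, (Rabs_right (v - u)), (Rabs_right (/ 2)) by lra.
  assert (0 <= (v - u) * (L * (v - u))) by (apply Rmult_le_pos; [|apply Rmult_le_pos]; lra).
  nra.
Qed.

Lemma trapezoid_error_C2 f M u v : u < v -> (forall x, continuity_pt f x) ->
  (forall x, u < x < v ->
     ex_derive f x /\ ex_derive (Derive f) x /\ Rabs (Derive (Derive f) x) <= M) ->
  Rabs (trapezoid_error f u v) <= M * (v - u) ^ 3.
Proof.
  intros Huv Hc Hd. unfold trapezoid_error.
  destruct (MVT_open f u v) as [xi [Hxi Hslope]]; [auto | apply Hd | intros; apply Hc |].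
  set (D := Derive f xi) in Hslope.
  set (chord := fun x => f u + D * (x - u)).
  assert (HM : 0 <= M).
  { destruct (Hd xi Hxi) as (_ & _ & HM). pose proof (Rabs_pos (Derive (Derive f) xi)). lra. }
  assert (Hchord : is_RInt chord u v ((v - u) * (f u + f v) / 2)).
  { replace ((v - u) * (f u + f v) / 2) with ((v - u) * f u + D * (v - u) ^ 2 / 2)
      by (replace (f v) with (f u + D * (v - u)) by lra; field).
    apply is_RInt_affine. }
  assert (Hslope_dev : forall x, u < x < v -> Rabs (Derive f x - D) <= M * (v - u)).
  { intros x Hx. eapply Rle_trans.
    - apply (lipschitz_of_derive_bound (Derive f) M u v); auto.
      intros z Hz. split; apply Hd; auto.
    - apply Rmult_le_compat_l; [auto|]. apply Rabs_le. lra. }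
  assert (Hgap : forall x, u <= x <= v -> Rabs (f x - chord x) <= M * (v - u) ^ 2).
  { intros x Hx.
    replace (f x - chord x) with ((f x - chord x) - (f u - chord u)) by (unfold chord; ring).
    eapply Rle_trans.
    - apply (Rabs_sub_le_derive_bound (fun y => f y - chord y) u x (M * (v - u))); [lra| |].
      + intros y Hy. assert (Hder : is_derive (fun y => f y - chord y) y (Derive f y - D)).
        { unfold chord. auto_derive; [apply Hd; lra|].
          change (Derive (fun x => f x)) with (Derive f). ring. }
        split; [eexists; apply Hder|]. rewrite (is_derive_unique _ _ _ Hder). apply Hslope_dev; lra.
      + intros y _. apply continuity_pt_minus; [apply Hc|].
        apply continuity_pt_of_ex_derive. unfold chord. auto_derive. auto.
    - replace (M * (v - u) ^ 2) with (M * (v - u) * (v - u)) by ring.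
      apply Rmult_le_compat_l; [apply Rmult_le_pos|]; lra. }
  assert (E : RInt (fun x => f x - chord x) u v = RInt f u v - (v - u) * (f u + f v) / 2).
  { apply is_RInt_unique, (is_RInt_minus (V := R_CompleteNormedModule) f chord); auto.
    apply RInt_correct, ex_RInt_continuity_pt; auto. }
  rewrite <- E. replace (M * (v - u) ^ 3) with ((v - u) * (M * (v - u) ^ 2)) by ring.
  apply abs_RInt_le_const; [lra | | auto].
  apply (ex_RInt_minus (V := R_NormedModule) f chord);
    [apply ex_RInt_continuity_pt; auto | eexists; apply Hchord].
Qed.

Definition ind_open (u v x : R) : R :=
  if Rlt_dec u x then if Rlt_dec x v then 1 else 0 else 0.

Lemma ind_open_nonneg u v x : 0 <= ind_open u v x.
Proof. unfold ind_open. repeat destruct Rlt_dec; lra. Qed.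

Lemma rsum_ind_open_grid_le n m x : (0 < n)%nat ->
  rsum m (fun k => ind_open (INR k / INR n) (INR (S k) / INR n) x) <= 1.
Proof.
  intros Hn. assert (Hnp : 0 < INR n) by (apply lt_0_INR; auto).
  enough (Hinv : rsum m (fun k => ind_open (INR k / INR n) (INR (S k) / INR n) x)
              <= if Rlt_dec x (INR m / INR n) then 1 else 0) by (destruct Rlt_dec in Hinv; lra).
  induction m as [|m IH]; cbn [rsum].
  - destruct Rlt_dec; lra.
  - assert (INR m / INR n < INR (S m) / INR n)
      by (rewrite S_INR; apply Rmult_lt_compat_r; [apply Rinv_0_lt_compat|]; lra).
    unfold ind_open at 2. revert IH.
    destruct (Rlt_dec x (INR m / INR n)), (Rlt_dec (INR m / INR n) x),
      (Rlt_dec x (INR (S m) / INR n)); lra.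
Qed.

Lemma trapezoid_error_cell f (r : nat) (c : nat -> R) L K u v :
  0 <= K -> 0 <= L -> 0 <= u -> u < v -> v <= 1 -> (forall x, continuity_pt f x) ->
  (forall x y, 0 <= x <= 1 -> 0 <= y <= 1 -> Rabs (f x - f y) <= L * Rabs (x - y)) ->
  ((forall j, (j < r)%nat -> ~ (u < c j < v)) ->
     Rabs (trapezoid_error f u v) <= K * (v - u) ^ 3) ->
  Rabs (trapezoid_error f u v)
    <= K * (v - u) ^ 3 + 2 * L * (v - u) ^ 2 * rsum r (fun j => ind_open u v (c j)).
Proof.
  intros HK HL Hu Huv Hv Hc Hl Hsmooth.
  assert (Hcount : 0 <= rsum r (fun j => ind_open u v (c j)))
    by (apply rsum_nonneg; intros; apply ind_open_nonneg).
  assert (0 <= K * (v - u) ^ 3) by (apply Rmult_le_pos; [|apply pow_le]; lra).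
  assert (0 <= 2 * L * (v - u) ^ 2) by (apply Rmult_le_pos; [|apply pow_le]; lra).
  destruct (classic (forall j, (j < r)%nat -> ~ (u < c j < v))) as [Hfree|Hjump].
  - specialize (Hsmooth Hfree). nra.
  - apply not_all_ex_not in Hjump as [j Hj].
    apply imply_to_and in Hj as [Hjr Hj]. apply NNPP in Hj.
    assert (1 <= rsum r (fun j => ind_open u v (c j))).
    { assert (Hone : ind_open u v (c j) = 1)
        by (unfold ind_open; destruct (Rlt_dec u (c j)), (Rlt_dec (c j) v); lra).
      rewrite <- Hone.
      apply (rsum_term_le r (fun j => ind_open u v (c j))); auto.
      intros; apply ind_open_nonneg. }
    assert (Rabs (trapezoid_error f u v) <= 2 * L * (v - u) ^ 2).
    { apply trapezoid_error_lipschitz; auto; [lra|]. intros; apply Hl; lra. }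
    nra.
Qed.

Lemma trapezoid_sum_identity f m : (forall x, continuity_pt f x) ->
  rsum m (fun k => f (INR (S k) / INR (S m))) - INR (S m) * RInt f 0 1 + (f 0 + f 1) / 2
  = - INR (S m)
      * rsum (S m) (fun k => trapezoid_error f (INR k / INR (S m)) (INR (S k) / INR (S m))).
Proof.
  intros Hc. set (N := INR (S m)). set (x := fun k => INR k / N).
  assert (HN : 0 < N) by apply lt_0_INR, Nat.lt_0_succ.
  assert (Hx0 : x O = 0) by (unfold x; simpl; field; lra).
  assert (Hx1 : x (S m) = 1) by (unfold x; fold N; field; lra).
  assert (Hint : forall p, rsum p (fun k => RInt f (x k) (x (S k))) = RInt f 0 (x p)).
  { induction p as [|p IH]; cbn [rsum]; [now rewrite Hx0, RInt_point|].
    rewrite IH.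
    apply (RInt_Chasles (V := R_CompleteNormedModule)); apply ex_RInt_continuity_pt; auto. }
  assert (Hends : rsum (S m) (fun k => (f (x k) + f (x (S k))) / 2)
                  = rsum m (fun k => f (x (S k))) + (f 0 + f 1) / 2).
  { rewrite (rsum_ext _ _ (fun k => / 2 * f (x k) + / 2 * f (x (S k)))) by (intros; field).
    rewrite rsum_plus, !rsum_scal, rsum_shift. cbn [rsum]. rewrite Hx0, Hx1. field. }
  assert (Hcells : rsum (S m) (fun k => (INR (S k) / N - INR k / N)
                                        * (f (INR k / N) + f (INR (S k) / N)) / 2)
                   = / N * rsum (S m) (fun k => (f (x k) + f (x (S k))) / 2)).
  { rewrite <- rsum_scal. apply rsum_ext. intros k _. unfold x. rewrite S_INR. field. lra. }
  unfold trapezoid_error. rewrite rsum_minus, Hint, Hx1, Hcells, Hends.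
  unfold x. field. lra.
Qed.

Lemma composite_trapezoid_error f (r : nat) (c : nat -> R) L K n :
  (0 < n)%nat -> 0 <= K -> 0 <= L -> (forall x, continuity_pt f x) ->
  (forall x y, 0 <= x <= 1 -> 0 <= y <= 1 -> Rabs (f x - f y) <= L * Rabs (x - y)) ->
  (forall u v, 0 <= u -> u < v -> v <= 1 -> (forall j, (j < r)%nat -> ~ (u < c j < v)) ->
     Rabs (trapezoid_error f u v) <= K * (v - u) ^ 3) ->
  Rabs (grid_sum f n - INR n * RInt f 0 1 + (f 0 + f 1) / 2) <= (K + 2 * L * INR r) / INR n.
Proof.
  intros Hn HK HL Hc Hl Hsmooth. unfold grid_sum.
  destruct n as [|m]; [lia|]. replace (S m - 1)%nat with m by lia.
  rewrite trapezoid_sum_identity by auto.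
  set (N := INR (S m)). assert (HN : 0 < N) by apply lt_0_INR, Nat.lt_0_succ.
  set (jumps := fun k => rsum r (fun j => ind_open (INR k / N) (INR (S k) / N) (c j))).
  assert (Hcell : forall k, (k < S m)%nat ->
    Rabs (trapezoid_error f (INR k / N) (INR (S k) / N))
      <= K / N ^ 3 + 2 * L / N ^ 2 * jumps k).
  { intros k Hk.
    assert (Hwidth : INR (S k) / N - INR k / N = / N) by (rewrite S_INR; field; lra).
    replace (K / N ^ 3) with (K * (INR (S k) / N - INR k / N) ^ 3)
      by (rewrite Hwidth; field; lra).
    replace (2 * L / N ^ 2) with (2 * L * (INR (S k) / N - INR k / N) ^ 2)
      by (rewrite Hwidth; field; lra).
    assert (0 <= INR k / N) by (apply Rdiv_le_0_compat; [apply pos_INR | lra]).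
    assert (INR k / N < INR (S k) / N) by (pose proof (Rinv_0_lt_compat N HN); lra).
    assert (INR (S k) / N <= 1) by (rewrite <- Rdiv_le_1 by auto; apply le_INR; lia).
    apply trapezoid_error_cell; auto. }
  assert (Hjumps : rsum (S m) jumps <= INR r).
  { unfold jumps. rewrite rsum_swap, <- (Rmult_1_r (INR r)), <- rsum_const.
    apply rsum_le. intros. apply rsum_ind_open_grid_le. lia. }
  rewrite Rabs_mult, Rabs_Ropp, Rabs_right by lra.
  apply Rle_trans with (N * rsum (S m) (fun k => K / N ^ 3 + 2 * L / N ^ 2 * jumps k)).
  { apply Rmult_le_compat_l; [lra|]. eapply Rle_trans; [apply rsum_abs | apply rsum_le, Hcell]. }
  rewrite rsum_plus, rsum_const, rsum_scal. fold N.
  replace (N * (N * (K / N ^ 3) + 2 * L / N ^ 2 * rsum (S m) jumps))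
    with (K / N + 2 * L / N * rsum (S m) jumps) by (field; lra).
  unfold Rdiv. rewrite Rmult_plus_distr_r. apply Rplus_le_compat_l.
  replace (2 * L * INR r * / N) with (2 * L * / N * INR r) by ring.
  apply Rmult_le_compat_l; auto.
  apply Rmult_le_pos; [lra | left; apply Rinv_0_lt_compat; lra].
Qed.

Lemma filter_forall_lt {T} {F : (T -> Prop) -> Prop} {FF : Filter F} (r : nat)
  (P : nat -> T -> Prop) :
  (forall j, (j < r)%nat -> F (P j)) -> F (fun y => forall j, (j < r)%nat -> P j y).
Proof.
  induction r as [|r IH]; intros HP.
  - apply filter_forall. intros y j Hj. lia.
  - assert (Hlt : F (fun y => forall j, (j < r)%nat -> P j y)) by (apply IH; intros; apply HP; lia).
    eapply filter_imp; [|apply (filter_and _ _ Hlt (HP r (Nat.lt_succ_diag_r r)))].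
    intros y [Hy Hr] j Hj. destruct (Nat.eq_dec j r) as [->|]; auto. apply Hy. lia.
Qed.

Lemma regular_pt_locally r c x : regular_pt r c x -> locally x (regular_pt r c).
Proof.
  intros [Hx Hxc]. apply filter_and.
  - apply (open_and _ _ (open_gt 0) (open_lt 1)). exact Hx.
  - apply filter_forall_lt. intros j Hj. apply open_neq. auto.
Qed.

Lemma lim_sub_eventually_const {F : (R -> Prop) -> Prop} {FF : Filter F} (g h : R -> R) l v :
  filterlim g F (locally l) -> F (fun y => h y = v) ->
  filterlim (fun y => g y - h y) F (locally (l - v)).
Proof.
  intros Hg Hh. apply filterlim_locally. intros eps.
  eapply filter_imp; [|apply (filter_and _ _ (proj1 (filterlim_locally g l) Hg eps) Hh)].
  intros y [Hy ->]. apply ball_R. replace (g y - v - (l - v)) with (g y - l) by ring. exact Hy.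
Qed.

Lemma ex_derive_shift (F G : R -> R) x k : locally x (fun y => F y = G y + k) -> ex_derive G x ->
  ex_derive F x /\ Derive F x = Derive G x.
Proof.
  intros Hloc Hd.
  assert (Hloc' : locally x (fun y => G y + k = F y)) by (eapply filter_imp; [|apply Hloc]; auto).
  split.
  - apply (ex_derive_ext_loc (fun y => G y + k)); [auto | auto_derive; auto].
  - rewrite <- (Derive_ext_loc _ _ _ Hloc'). apply is_derive_unique.
    auto_derive; [auto|]. change (Derive (fun y => G y)) with (Derive G). ring.
Qed.

Lemma finite_max_below (f : nat -> R) m x p0 : p0 < x -> exists p, p0 <= p < x /\
  (p = p0 \/ exists j, (j < m)%nat /\ p = f j) /\ forall j, (j < m)%nat -> f j < x -> f j <= p.
Proof.
  intros Hp0. induction m as [|m IH].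
  - exists p0. repeat split; auto; [lra | intros; lia].
  - destruct IH as (p & Hp & Hwhich & Hmax).
    assert (Hwhich' : p = p0 \/ exists j, (j < S m)%nat /\ p = f j).
    { destruct Hwhich as [|(j & Hj & ->)]; auto. right. exists j. split; auto. }
    destruct (Rlt_dec (f m) x) as [Hfx|Hfx]; [destruct (Rle_dec (f m) p) as [Hfp|Hfp]|].
    + exists p. repeat split; auto; try lra.
      intros j Hj Hj'. destruct (Nat.eq_dec j m) as [->|]; auto. apply Hmax; auto. lia.
    + exists (f m). repeat split; try lra; [right; exists m; auto|].
      intros j Hj Hj'. destruct (Nat.eq_dec j m) as [->|]; [lra|].
      enough (f j <= p) by lra. apply Hmax; auto. lia.
    + exists p. repeat split; auto; try lra.
      intros j Hj Hj'. destruct (Nat.eq_dec j m) as [->|]; [lra|]. apply Hmax; auto. lia.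
Qed.

Lemma finite_min_above (f : nat -> R) m x q0 : x < q0 -> exists q, x < q <= q0 /\
  (q = q0 \/ exists j, (j < m)%nat /\ q = f j) /\ forall j, (j < m)%nat -> x < f j -> q <= f j.
Proof.
  intros Hq0.
  destruct (finite_max_below (fun j => - f j) m (- x) (- q0)) as (p & Hp & Hwhich & Hmax); [lra|].
  exists (- p). repeat split; try lra.
  - destruct Hwhich as [->|(j & Hj & ->)]; [left; lra | right; exists j; split; auto; lra].
  - intros j Hj Hj'. enough (- f j <= p) by lra. apply Hmax; [auto | lra].
Qed.

Definition endpoint (r : nat) (c : nat -> R) (i : nat) : R :=
  if Nat.ltb i r then c i else if Nat.eqb i r then 0 else 1.

Lemma regular_pt_interval r c x : regular_pt r c x ->
  exists a b, (a < S (S r))%nat /\ (b < S (S r))%nat /\ endpoint r c a < x < endpoint r c b /\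
    forall y, endpoint r c a < y < endpoint r c b -> regular_pt r c y.
Proof.
  intros [Hx Hxc].
  destruct (finite_max_below c r x 0) as (p & Hp & Hpwhich & Hpmax); [lra|].
  destruct (finite_min_above c r x 1) as (q & Hq & Hqwhich & Hqmin); [lra|].
  assert (Ha : exists a, (a < S (S r))%nat /\ endpoint r c a = p).
  { destruct Hpwhich as [->|(j & Hj & ->)].
    - exists r. unfold endpoint. rewrite Nat.ltb_irrefl, Nat.eqb_refl. auto.
    - exists j. unfold endpoint. apply Nat.ltb_lt in Hj as Hj'. rewrite Hj'. auto. }
  assert (Hb : exists b, (b < S (S r))%nat /\ endpoint r c b = q).
  { destruct Hqwhich as [->|(j & Hj & ->)].
    - exists (S r). unfold endpoint.
      rewrite (proj2 (Nat.ltb_ge _ _)), (proj2 (Nat.eqb_neq _ _)) by lia. auto.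
    - exists j. unfold endpoint. apply Nat.ltb_lt in Hj as Hj'. rewrite Hj'. auto. }
  destruct Ha as (a & Ha & <-). destruct Hb as (b & Hb & <-).
  exists a, b. do 2 (split; [auto|]). split; [lra|].
  intros y Hy. split; [lra|]. intros j Hj ->.
  destruct (Rlt_dec (c j) x) as [Hlt|Hge].
  - specialize (Hpmax j Hj Hlt). lra.
  - assert (Hgt : x < c j) by (destruct (Req_dec x (c j)); [exfalso; apply (Hxc j); auto | lra]).
    specialize (Hqmin j Hj Hgt). lra.
Qed.

Lemma Derive_bounded (g : R -> R) r c M :
  (forall x, regular_pt r c x -> ex_derive g x /\ ex_derive (Derive g) x) ->
  (forall x, regular_pt r c x -> Rabs (Derive (Derive g) x) <= M) ->
  exists L, forall x, regular_pt r c x -> Rabs (Derive g x) <= L.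
Proof.
  (* On the interval (a, b) of regular points around x, |g''| <= M, so g' x is within M of
     g' at the midpoint of (a, b); there are only finitely many such midpoints. *)
  intros Hd Hbd. set (mid := fun a b => (endpoint r c a + endpoint r c b) / 2).
  exists (M + rsum (S (S r)) (fun a => rsum (S (S r)) (fun b => Rabs (Derive g (mid a b))))).
  intros x Hx. destruct (regular_pt_interval r c x Hx) as (a & b & Ha & Hb & Hab & Hreg).
  assert (HM : 0 <= M)
    by (pose proof (Hbd x Hx); pose proof (Rabs_pos (Derive (Derive g) x)); lra).
  assert (Hmid : regular_pt r c (mid a b)) by (apply Hreg; unfold mid; lra).
  assert (Hdev : Rabs (Derive g x - Derive g (mid a b)) <= M).
  { eapply Rle_trans.
    - apply (lipschitz_of_derive_bound (Derive g) M (endpoint r c a) (endpoint r c b));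
        [|auto | unfold mid; lra].
      intros z Hz. split; [apply Hd | apply Hbd]; auto.
    - destruct Hx as [Hx _], Hmid as [Hm _].
      assert (Rabs (x - mid a b) <= 1) by (apply Rabs_le; lra).
      rewrite <- (Rmult_1_r M) at 2. apply Rmult_le_compat_l; auto. }
  assert (Hsum : Rabs (Derive g (mid a b))
                 <= rsum (S (S r)) (fun a => rsum (S (S r)) (fun b => Rabs (Derive g (mid a b))))).
  { eapply Rle_trans; [|apply (rsum_term_le _ _ a); auto].
    - apply (rsum_term_le _ (fun b => Rabs (Derive g (mid a b)))); auto.
      intros; apply Rabs_pos.
    - intros; apply rsum_nonneg; intros; apply Rabs_pos. }
  replace (Derive g x) with ((Derive g x - Derive g (mid a b)) + Derive g (mid a b)) by ring.
  eapply Rle_trans; [apply Rabs_triang | lra].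
Qed.

(** * Removing the jumps *)

Lemma is_RInt_rsum m (f : nat -> R -> R) (I : nat -> R) a b :
  (forall j, (j < m)%nat -> is_RInt (f j) a b (I j)) ->
  is_RInt (fun x => rsum m (fun j => f j x)) a b (rsum m I).
Proof.
  induction m as [|m IH]; intros Hf.
  - simpl. replace 0 with (scal (b - a) 0) at 1 by (unfold scal; simpl; unfold mult; simpl; ring).
    apply (is_RInt_const (V := R_CompleteNormedModule)).
  - apply (is_RInt_plus (V := R_CompleteNormedModule) (fun x => rsum m (fun j => f j x)) (f m)).
    + apply IH. intros j Hj. apply Hf. lia.
    + apply Hf. lia.
Qed.

Definition clamp01 (x : R) : R := Rmax 0 (Rmin 1 x).

Lemma clamp01_range x : 0 <= clamp01 x <= 1.
Proof. unfold clamp01, Rmax, Rmin. repeat destruct Rle_dec; lra. Qed.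

Lemma clamp01_id x : 0 <= x <= 1 -> clamp01 x = x.
Proof. intros. unfold clamp01, Rmax, Rmin. repeat destruct Rle_dec; lra. Qed.

Lemma clamp01_contraction x y : Rabs (clamp01 x - clamp01 y) <= Rabs (x - y).
Proof.
  unfold clamp01, Rmax, Rmin. repeat destruct Rle_dec; unfold Rabs; repeat destruct Rcase_abs; lra.
Qed.

Lemma continuity_pt_lipschitz (f : R -> R) L x :
  (forall y z, Rabs (f y - f z) <= L * Rabs (y - z)) -> continuity_pt f x.
Proof.
  intros Hf. apply continuity_pt_filterlim, filterlim_locally. intros eps.
  assert (HL : 0 < Rabs L + 1) by (pose proof (Rabs_pos L); lra).
  assert (Hpos : 0 < eps / (Rabs L + 1)) by (apply Rdiv_lt_0_compat; [apply cond_pos | lra]).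
  exists (mkposreal _ Hpos). intros y Hy. apply ball_R in Hy. apply ball_R. simpl in Hy.
  eapply Rle_lt_trans; [apply Hf|].
  apply Rle_lt_trans with ((Rabs L + 1) * Rabs (y - x)).
  - pose proof (Rle_abs L). pose proof (Rabs_pos (y - x)). nra.
  - replace (pos eps) with ((Rabs L + 1) * (eps / (Rabs L + 1))) by (field; lra).
    apply Rmult_lt_compat_l; auto.
Qed.

Section JumpRemoval.

Variables (g : R -> R) (r : nat) (c gm gp : nat -> R) (step : nat -> R -> R) (M : R).

Hypothesis Hc01 : forall j, (j < r)%nat -> 0 < c j < 1.
Hypothesis Hc_inj : forall i j, (i < r)%nat -> (j < r)%nat -> c i = c j -> i = j.
Hypothesis Hd : forall x, regular_pt r c x -> ex_derive g x /\ ex_derive (Derive g) x.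
Hypothesis Hbd : forall x, regular_pt r c x -> Rabs (Derive (Derive g) x) <= M.
Hypothesis Hg0 : filterlim g (at_right 0) (locally (g 0)).
Hypothesis Hg1 : filterlim g (at_left 1) (locally (g 1)).
Hypothesis Hgm : forall j, (j < r)%nat -> filterlim g (at_left (c j)) (locally (gm j)).
Hypothesis Hgp : forall j, (j < r)%nat -> filterlim g (at_right (c j)) (locally (gp j)).
Hypothesis Hstep_lt : forall j x, x < c j -> step j x = 0.
Hypothesis Hstep_gt : forall j x, c j < x -> step j x = 1.
(* The value of the step at its own jump is what makes [smooth_part] continuous at [c j]. *)
Hypothesis Hg_at_jump : forall j, (j < r)%nat -> g (c j) = gm j + (gp j - gm j) * step j (c j).

Definition jump_part x := rsum r (fun j => (gp j - gm j) * step j x).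
Definition smooth_part x := g x - jump_part x.

Definition jumps_below p := rsum r (fun j => (gp j - gm j) * if Rlt_dec (c j) p then 1 else 0).
Definition jumps_upto p := rsum r (fun j => (gp j - gm j) * if Rle_dec (c j) p then 1 else 0).

Lemma step_off_jump j x : x <> c j ->
  step j x = (if Rlt_dec (c j) x then 1 else 0) /\ step j x = (if Rle_dec (c j) x then 1 else 0).
Proof.
  intros Hx. destruct (Rlt_dec (c j) x).
  - rewrite Hstep_gt by auto. destruct Rle_dec; [auto | lra].
  - rewrite Hstep_lt by lra. destruct Rle_dec; [lra | auto].
Qed.

Lemma jumps_off_jump x : (forall j, (j < r)%nat -> x <> c j) ->
  jumps_below x = jump_part x /\ jumps_upto x = jump_part x.
Proof.
  intros Hx. split; apply rsum_ext; intros j Hj; f_equal; symmetry; apply step_off_jump; auto.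
Qed.

Lemma jump_part_locally_const x : (forall j, (j < r)%nat -> x <> c j) ->
  locally x (fun y => jump_part y = jump_part x).
Proof.
  intros Hx.
  assert (Hside : forall j, (j < r)%nat -> locally x (fun y => step j y = step j x)).
  { intros j Hj. destruct (Rlt_dec x (c j)) as [Hlt|Hge].
    - eapply filter_imp; [|apply (open_lt (c j)); exact Hlt].
      intros y Hy. rewrite !Hstep_lt; auto.
    - assert (Hgt : c j < x) by (specialize (Hx j Hj); lra).
      eapply filter_imp; [|apply (open_gt (c j)); exact Hgt].
      intros y Hy. rewrite !Hstep_gt; auto. }
  eapply filter_imp; [|apply (filter_forall_lt r _ Hside)].
  intros y Hy. apply rsum_ext. intros j Hj. rewrite Hy; auto.
Qed.

Lemma jump_part_at_right p : at_right p (fun y => jump_part y = jumps_upto p).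
Proof.
  assert (Hpieces : forall j, (j < r)%nat ->
            at_right p (fun y => step j y = if Rle_dec (c j) p then 1 else 0)).
  { intros j Hj. destruct (Rle_dec (c j) p) as [Hle|Hgt].
    - unfold at_right, within. apply filter_forall. intros y Hy. apply Hstep_gt. lra.
    - apply filter_le_within. eapply filter_imp; [|apply (open_lt (c j)); lra].
      intros y Hy. apply Hstep_lt. auto. }
  eapply filter_imp; [|apply (filter_forall_lt r _ Hpieces)].
  intros y Hy. apply rsum_ext. intros j Hj. rewrite Hy; auto.
Qed.

Lemma jump_part_at_left p : at_left p (fun y => jump_part y = jumps_below p).
Proof.
  assert (Hpieces : forall j, (j < r)%nat ->
            at_left p (fun y => step j y = if Rlt_dec (c j) p then 1 else 0)).
  { intros j Hj. destruct (Rlt_dec (c j) p) as [Hlt|Hge].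
    - apply filter_le_within. eapply filter_imp; [|apply (open_gt (c j)); lra].
      intros y Hy. apply Hstep_gt. auto.
    - unfold at_left, within. apply filter_forall. intros y Hy. apply Hstep_lt. lra. }
  eapply filter_imp; [|apply (filter_forall_lt r _ Hpieces)].
  intros y Hy. apply rsum_ext. intros j Hj. rewrite Hy; auto.
Qed.

Lemma smooth_part_at_jump j : (j < r)%nat ->
  smooth_part (c j) = gm j - jumps_below (c j) /\ smooth_part (c j) = gp j - jumps_upto (c j).
Proof.
  intros Hj.
  assert (Hother : forall b : nat -> R, (forall i, (i < r)%nat -> i <> j -> b i = step i (c j)) ->
            rsum r (fun i => (gp i - gm i) * b i) - jump_part (c j)
            = (gp j - gm j) * (b j - step j (c j))).
  { intros b Hb. unfold jump_part. rewrite <- rsum_minus.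
    rewrite (rsum_single r _ j Hj); [ring|].
    intros i Hi Hij. rewrite Hb by auto. ring. }
  assert (Hneq : forall i, (i < r)%nat -> i <> j -> c j <> c i)
    by (intros i Hi Hij Heq; apply Hij, Hc_inj; auto).
  assert (Hbelow : jumps_below (c j) - jump_part (c j) = (gp j - gm j) * (0 - step j (c j))).
  { unfold jumps_below.
    rewrite Hother by (intros i Hi Hij; symmetry; apply step_off_jump, Hneq; auto).
    destruct Rlt_dec; [lra | ring]. }
  assert (Hupto : jumps_upto (c j) - jump_part (c j) = (gp j - gm j) * (1 - step j (c j))).
  { unfold jumps_upto.
    rewrite Hother by (intros i Hi Hij; symmetry; apply step_off_jump, Hneq; auto).
    destruct Rle_dec; [ring | lra]. }
  unfold smooth_part. rewrite Hg_at_jump by auto. split; lra.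
Qed.

Lemma smooth_part_right_cont x : 0 <= x < 1 ->
  filterlim smooth_part (at_right x) (locally (smooth_part x)).
Proof.
  intros Hx. destruct (classic (exists j, (j < r)%nat /\ x = c j)) as [(j & Hj & ->)|Hreg].
  - rewrite (proj2 (smooth_part_at_jump j Hj)).
    apply lim_sub_eventually_const; [auto | apply jump_part_at_right].
  - assert (Hx' : forall j, (j < r)%nat -> x <> c j) by (intros j Hj Hxj; apply Hreg; eauto).
    unfold smooth_part at 2. rewrite <- (proj2 (jumps_off_jump x Hx')).
    apply lim_sub_eventually_const; [|apply jump_part_at_right].
    destruct (Req_dec x 0) as [->|Hx0]; [auto|].
    apply (filterlim_filter_le_1 _ (filter_le_within _)), (ex_derive_continuous g x), Hd.
    split; [lra | auto].
Qed.

Lemma smooth_part_left_cont x : 0 < x <= 1 ->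
  filterlim smooth_part (at_left x) (locally (smooth_part x)).
Proof.
  intros Hx. destruct (classic (exists j, (j < r)%nat /\ x = c j)) as [(j & Hj & ->)|Hreg].
  - rewrite (proj1 (smooth_part_at_jump j Hj)).
    apply lim_sub_eventually_const; [auto | apply jump_part_at_left].
  - assert (Hx' : forall j, (j < r)%nat -> x <> c j) by (intros j Hj Hxj; apply Hreg; eauto).
    unfold smooth_part at 2. rewrite <- (proj1 (jumps_off_jump x Hx')).
    apply lim_sub_eventually_const; [|apply jump_part_at_left].
    destruct (Req_dec x 1) as [->|Hx1]; [auto|].
    apply (filterlim_filter_le_1 _ (filter_le_within _)), (ex_derive_continuous g x), Hd.
    split; [lra | auto].
Qed.

Lemma smooth_part_derive F x :
  regular_pt r c x -> (forall y, 0 < y < 1 -> F y = smooth_part y) ->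
  ex_derive F x /\ Derive F x = Derive g x /\
  ex_derive (Derive F) x /\ Derive (Derive F) x = Derive (Derive g) x.
Proof.
  intros Hx HF.
  assert (Hnear : locally x (fun y => regular_pt r c y /\ F y = g y + - jump_part x)).
  { eapply filter_imp;
      [|apply (filter_and _ _ (regular_pt_locally r c x Hx)
                                (jump_part_locally_const x (proj2 Hx)))].
    intros y [Hy Hjy]. split; auto. rewrite HF by apply Hy. unfold smooth_part. rewrite Hjy. ring. }
  assert (Hder : locally x (fun y => ex_derive F y /\ Derive F y = Derive g y)).
  { eapply filter_imp; [|apply locally_locally, Hnear]. intros y Hy.
    apply (ex_derive_shift F g y (- jump_part x)).
    - eapply filter_imp; [|apply Hy]. intros z Hz. apply Hz.
    - apply Hd, (locally_singleton _ _ Hy). }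
  assert (Hder' : locally x (fun y => Derive g y = Derive F y))
    by (eapply filter_imp; [|apply Hder]; intros y [_ E]; auto).
  destruct (locally_singleton _ _ Hder) as [HF1 HF1'].
  repeat split; auto.
  - eapply ex_derive_ext_loc; [apply Hder' | apply Hd, Hx].
  - symmetry. apply Derive_ext_loc, Hder'.
Qed.

Lemma smooth_part_lipschitz L : (forall x, regular_pt r c x -> Rabs (Derive g x) <= L) ->
  forall x y, 0 <= x <= 1 -> 0 <= y <= 1 ->
  Rabs (smooth_part x - smooth_part y) <= L * Rabs (x - y).
Proof.
  intros HL.
  assert (Hle : forall x y, 0 <= x < y -> y <= 1 ->
                Rabs (smooth_part y - smooth_part x) <= L * (y - x)).
  { intros x y Hxy Hy. apply (Rabs_sub_le_derive_bound_except smooth_part L c r); [lra | | |].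
    - intros z Hz Hzc. assert (Hreg : regular_pt r c z) by (split; [lra | auto]).
      destruct (smooth_part_derive smooth_part z Hreg) as (Hex & HD & _); auto.
      split; auto. rewrite HD. auto.
    - intros. apply smooth_part_right_cont. lra.
    - intros. apply smooth_part_left_cont. lra. }
  intros x y Hx Hy. destruct (Rtotal_order x y) as [Hlt|[<-|Hgt]].
  - rewrite Rabs_minus_sym, (Rabs_minus_sym x), (Rabs_right (y - x)) by lra. apply Hle; lra.
  - rewrite !Rminus_diag, Rabs_R0, Rmult_0_r. lra.
  - rewrite (Rabs_right (x - y)) by lra. apply Hle; lra.
Qed.

Lemma is_RInt_jump_part : is_RInt jump_part 0 1 (rsum r (fun j => (gp j - gm j) * (1 - c j))).
Proof.
  assert (Hunit : forall j, (j < r)%nat -> is_RInt (step j) 0 1 (1 - c j)).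
  { intros j Hj. destruct (Hc01 j Hj) as [Hc0 Hc1].
    replace (1 - c j) with (plus (scal (c j - 0) 0) (scal (1 - c j) 1))
      by (unfold plus, scal; simpl; unfold mult; simpl; ring).
    apply (is_RInt_Chasles (V := R_CompleteNormedModule) _ 0 (c j) 1).
    - apply (is_RInt_ext (V := R_CompleteNormedModule) (fun _ => 0));
        [|apply (is_RInt_const (V := R_CompleteNormedModule))].
      intros x Hx. rewrite Rmin_left, Rmax_right in Hx by lra. rewrite Hstep_lt; [auto | lra].
    - apply (is_RInt_ext (V := R_CompleteNormedModule) (fun _ => 1));
        [|apply (is_RInt_const (V := R_CompleteNormedModule))].
      intros x Hx. rewrite Rmin_left, Rmax_right in Hx by lra. rewrite Hstep_gt; [auto | lra]. }
  apply (is_RInt_rsum r (fun j x => (gp j - gm j) * step j x)).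
  intros j Hj. apply (is_RInt_scal (V := R_CompleteNormedModule)), Hunit, Hj.
Qed.

Lemma smooth_part_composite_trapezoid :
  ex_RInt smooth_part 0 1 /\ exists C, forall n, (0 < n)%nat ->
  Rabs (grid_sum smooth_part n - INR n * RInt smooth_part 0 1 + (smooth_part 0 + smooth_part 1) / 2)
    <= C / INR n.
Proof.
  destruct (Derive_bounded g r c M Hd Hbd) as [L0 HL0].
  set (L := Rabs L0). set (K := Rabs M).
  assert (HL : 0 <= L) by apply Rabs_pos. assert (HK : 0 <= K) by apply Rabs_pos.
  (* RInt and continuity_pt see all of R: extend smooth_part off [0,1] by constants. *)
  set (f := fun y => smooth_part (clamp01 y)).
  assert (Hf : forall y, 0 <= y <= 1 -> f y = smooth_part y)
    by (intros; unfold f; rewrite clamp01_id; auto).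
  assert (Hlip : forall y z, Rabs (f y - f z) <= L * Rabs (y - z)).
  { intros y z. eapply Rle_trans.
    - apply (smooth_part_lipschitz L); [|apply clamp01_range..].
      intros x Hx. eapply Rle_trans; [apply HL0, Hx | apply Rle_abs].
    - apply Rmult_le_compat_l; [auto | apply clamp01_contraction]. }
  assert (Hc : forall x, continuity_pt f x) by (intros; apply (continuity_pt_lipschitz f L); auto).
  assert (Hcells : forall u v, 0 <= u -> u < v -> v <= 1 ->
                   (forall j, (j < r)%nat -> ~ (u < c j < v)) ->
                   Rabs (trapezoid_error f u v) <= K * (v - u) ^ 3).
  { intros u v Hu Huv Hv Hfree. apply trapezoid_error_C2; auto.
    intros z Hz. assert (Hreg : regular_pt r c z).
    { split; [lra|]. intros j Hj Hzj. apply (Hfree j Hj). rewrite <- Hzj. lra. }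
    destruct (smooth_part_derive f z Hreg) as (Hex & _ & Hex2 & HD2); [intros; apply Hf; lra|].
    repeat split; auto. rewrite HD2. eapply Rle_trans; [apply Hbd, Hreg | apply Rle_abs]. }
  assert (Hint : RInt f 0 1 = RInt smooth_part 0 1).
  { apply RInt_ext. intros x Hx. rewrite Rmin_left, Rmax_right in Hx by lra. apply Hf. lra. }
  split.
  - apply (ex_RInt_ext f); [|apply ex_RInt_continuity_pt; auto].
    intros x Hx. rewrite Rmin_left, Rmax_right in Hx by lra. apply Hf. lra.
  - exists (K + 2 * L * INR r). intros n Hn.
    rewrite <- Hint, <- (Hf 0), <- (Hf 1) by lra.
    rewrite (grid_sum_ext smooth_part f) by (intros y Hy; symmetry; apply Hf; lra).
    apply (composite_trapezoid_error f r c); auto.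
Qed.

Lemma trapezoid_with_jumps : exists C, forall n, (0 < n)%nat ->
  Rabs (grid_sum g n
        - (INR n * RInt g 0 1 - (g 0 + g 1) / 2
           + rsum r (fun j => (grid_sum (step j) n - INR n * (1 - c j) + 1 / 2) * (gp j - gm j))))
    <= C / INR n.
Proof.
  destruct smooth_part_composite_trapezoid as [Hex [C HC]].
  exists C. intros n Hn. eapply Rle_trans; [|apply (HC n Hn)]. right. f_equal.
  assert (Hsum : grid_sum g n
                 = grid_sum smooth_part n + rsum r (fun j => (gp j - gm j) * grid_sum (step j) n)).
  { unfold grid_sum. rewrite (rsum_ext r _ (fun j => rsum (n - 1)
                                (fun k => (gp j - gm j) * step j (INR (S k) / INR n))))
      by (intros; symmetry; apply rsum_scal).
    rewrite <- rsum_swap, <- rsum_plus. apply rsum_ext. intros k _.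
    unfold smooth_part, jump_part. ring. }
  assert (Hint : RInt g 0 1 = RInt smooth_part 0 1 + rsum r (fun j => (gp j - gm j) * (1 - c j))).
  { apply is_RInt_unique.
    apply (is_RInt_ext (V := R_CompleteNormedModule) (fun y => plus (smooth_part y) (jump_part y))).
    - intros y _. unfold smooth_part, plus. simpl. ring.
    - apply (is_RInt_plus (V := R_CompleteNormedModule));
        [apply RInt_correct, Hex | apply is_RInt_jump_part]. }
  assert (Hat0 : smooth_part 0 = g 0).
  { unfold smooth_part, jump_part. rewrite (rsum_ext _ _ (fun _ => 0)), rsum_const; [ring|].
    intros j Hj. rewrite Hstep_lt; [ring | apply Hc01, Hj]. }
  assert (Hat1 : smooth_part 1 = g 1 - rsum r (fun j => gp j - gm j)).
  { unfold smooth_part, jump_part. rewrite (rsum_ext _ _ (fun j => gp j - gm j)); [ring|].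
    intros j Hj. rewrite Hstep_gt; [ring | apply Hc01, Hj]. }
  assert (Hcount :
            rsum r (fun j => (grid_sum (step j) n - INR n * (1 - c j) + 1 / 2) * (gp j - gm j))
            = rsum r (fun j => (gp j - gm j) * grid_sum (step j) n)
              - INR n * rsum r (fun j => (gp j - gm j) * (1 - c j))
              + 1 / 2 * rsum r (fun j => gp j - gm j)).
  { rewrite <- !rsum_scal, <- rsum_minus, <- rsum_plus. apply rsum_ext. intros; ring. }
  rewrite Hsum, Hint, Hat0, Hat1, Hcount. lra.
Qed.

End JumpRemoval.

Lemma increasing_seq_lt (r : nat) (c : nat -> R) :
  (forall j, (S j < r)%nat -> c j < c (S j)) ->
  forall i j, (i < j)%nat -> (j < r)%nat -> c i < c j.
Proof.
  intros Hc i j Hij. induction Hij as [|j Hij IH]; intros Hjr; [apply Hc; auto|].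
  apply Rlt_trans with (c j); [apply IH | apply Hc]; lia.
Qed.

Lemma increasing_seq_injective (r : nat) (c : nat -> R) :
  (forall j, (S j < r)%nat -> c j < c (S j)) ->
  forall i j, (i < r)%nat -> (j < r)%nat -> c i = c j -> i = j.
Proof.
  intros Hc i j Hi Hj Hij. destruct (Nat.lt_total i j) as [Hlt|[Heq|Hgt]]; auto.
  - pose proof (increasing_seq_lt r c Hc i j Hlt Hj). lra.
  - pose proof (increasing_seq_lt r c Hc j i Hgt Hi). lra.
Qed.

Theorem lemma2p2 (g : R -> R) (r : nat) (c : nat -> R)
  (gm gp : nat -> R)
  (* 0 < c_1 < ... < c_r < 1 (indexed here 0..r-1) *)
  (Hc01 : forall j, (j < r)%nat -> 0 < c j < 1)
  (Hcinc : forall j, (S j < r)%nat -> c j < c (S j))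
  (* g twice differentiable on [0,1] away from the c_j ... *)
  (Hd : forall x, regular_pt r c x -> ex_derive g x /\ ex_derive (Derive g) x)
  (* ... with bounded second derivative *)
  (Hbd : exists M, forall x, regular_pt r c x -> Rabs (Derive (Derive g) x) <= M)
  (* one-sided continuity of g at the endpoints 0 and 1 *)
  (H0 : filterlim g (at_right 0) (locally (g 0)))
  (H1 : filterlim g (at_left 1) (locally (g 1)))
  (* finite one-sided limits g(c_j-) = gm j, g(c_j+) = gp j *)
  (Hgm : forall j, (j < r)%nat -> filterlim g (at_left (c j)) (locally (gm j)))
  (Hgp : forall j, (j < r)%nat -> filterlim g (at_right (c j)) (locally (gp j))) :
  ((forall j, (j < r)%nat -> filterlim g (at_left (c j)) (locally (g (c j)))) ->
   exists C : R, exists N : nat, forall n : nat, (N <= n)%nat -> (0 < n)%nat ->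
     Rabs (rsum (n - 1) (fun k => g (INR (S k) / INR n))
           - (INR n * RInt g 0 1 - (g 0 + g 1) / 2
              + rsum r (fun j => (fracR (INR n * c j) - 1 / 2) * (gp j - gm j))))
       <= C / INR n)
  /\
  ((forall j, (j < r)%nat -> filterlim g (at_right (c j)) (locally (g (c j)))) ->
   exists C : R, exists N : nat, forall n : nat, (N <= n)%nat -> (0 < n)%nat ->
     Rabs (rsum (n - 1) (fun k => g (INR (S k) / INR n))
           - (INR n * RInt g 0 1 - (g 0 + g 1) / 2
              + rsum r (fun j => (fracR' (INR n * c j) - 1 / 2) * (gp j - gm j))))
       <= C / INR n).
Proof.
  destruct Hbd as [M HM]. pose proof (increasing_seq_injective r c Hcinc) as Hinj.
  split; intros Hcont.
  - destruct (trapezoid_with_jumps g r c gm gp (fun j x => if Rlt_dec (c j) x then 1 else 0) M)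
      as [C HC]; auto; try (intros j x Hx; destruct Rlt_dec; lra).
    + intros j Hj. destruct Rlt_dec; [lra|].
      rewrite (filterlim_locally_unique _ _ _ (Hcont j Hj) (Hgm j Hj)). ring.
    + exists C, O. intros n _ Hn. erewrite (rsum_ext r); [apply HC, Hn|].
      intros j Hj. cbv beta. rewrite grid_count_lt by auto. unfold fracR. field.
  - destruct (trapezoid_with_jumps g r c gm gp (fun j x => if Rle_dec (c j) x then 1 else 0) M)
      as [C HC]; auto; try (intros j x Hx; destruct Rle_dec; lra).
    + intros j Hj. destruct Rle_dec; [|lra].
      rewrite (filterlim_locally_unique _ _ _ (Hcont j Hj) (Hgp j Hj)). ring.
    + exists C, O. intros n _ Hn. erewrite (rsum_ext r); [apply HC, Hn|].
      intros j Hj. cbv beta. rewrite grid_count_le by auto. unfold fracR'. field.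
Qed.
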